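(* For integers $\ell,k$ with $1\le\ell\le 3$ and $k\ge\ell$, $\overline{\alpha}(\{1,2k,2k+2\ell\})=\frac{2k}{4k+2\ell}$.
   Context: For a finite set $S$ of positive integers, the distance graph $G(S)$ has vertex set $\mathbb{Z}$, with $i,j$ adjacent iff $|i-j|\in S$. The density of $A\subseteq\mathbb{Z}$ is $\delta(A)=\limsup_{N\to\infty}\frac{|A\cap[-N,N]|}{2N+1}$, and the independence ratio $\overline{\alpha}(S)$ is the supremum of $\delta(A)$ over independent sets $A$ of $G(S)$. *)

From Stdlib Require Import Reals ZArith List.
From Coquelicot Require Import Coquelicot.
Open Scope R_scope.

Definition pos_set (S : list Z) : Prop := forall s, In s S -> (0 < s)%Z.

(* Subsets of Z are represented by boolean predicates (every subset has one,
   classically). A is independent in the distance graph G(S) iff no two of its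
   elements are at a distance lying in S. *)
Definition independent (S : list Z) (A : Z -> bool) : Prop :=
  forall i j : Z, A i = true -> A j = true -> ~ In (Z.abs (i - j)) S.

Definition window (N : nat) : list Z :=
  map (fun i => (Z.of_nat i - Z.of_nat N)%Z) (seq 0 (2 * N + 1)).

Definition dens_ratio (A : Z -> bool) (N : nat) : R :=
  INR (length (filter A (window N))) / INR (2 * N + 1).

Definition density (A : Z -> bool) : Rbar := LimSup_seq (dens_ratio A).

Definition indep_ratio (S : list Z) : Rbar :=
  Rbar_lub (fun x => exists A, independent S A /\ density A = x).

From Stdlib Require Import Reals ZArith List Znumtheory Lia Lra Bool Classical.
From Coquelicot Require Import Coquelicot.

(* Let P = 4k + 2l. The set of even residues in [0, 2k) and odd residues in [2k, 4k),
   repeated with period P, is independent and has 2k points per period; it remains to see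
   that an independent set A has at most c = 2k points in any window of length P.

   Extend the window P-periodically and put beta y = [y in A] xor (y odd). Since A has no
   two points at distance 1, beta flips between t and t + 1 exactly when neither point is
   in A; since y and y + 2k mod P are at distance 2k or 2k + 2l, beta agrees at y and
   y + 2k exactly when neither point is in A. So beta has at most P - 2c + 2 flips and
   exactly P - 2c agreements at step 2k; for c > 2k: at most 2l flips, fewer than 2l
   agreements. But a P-periodic beta with at most 2l flips has at least 2l agreements.
   Split Z/P into the orbits of y |-> y + 2k: around a closed orbit the number of
   disagreements is even, so each orbit of odd length carries an agreement. In the
   remaining cases (l = 2 or 3 and gcd(k, l) = 1) an orbit with at most one agreement
   makes beta alternate along it, and as 2k tau = +-2 (mod P) for a suitable odd tau
   this gives beta z <> beta (z + 2) at M - tau places, M = P/2 being the orbit length,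
   hence too many flips. *)

Open Scope Z_scope.

(** * Counting on integer intervals *)

Definition interval (a n : Z) : list Z :=
  map (fun i => a + Z.of_nat i) (seq 0 (Z.to_nat n)).

Definition count_on (p : Z -> bool) (a n : Z) : Z :=
  Z.of_nat (length (filter p (interval a n))).

Definition bit (b : bool) : Z := if b then 1 else 0.

Lemma in_interval x a n : In x (interval a n) <-> a <= x < a + n.
Proof.
  unfold interval. rewrite in_map_iff. split.
  - intros [i [<- Hi]]. apply in_seq in Hi. lia.
  - intro H. exists (Z.to_nat (x - a)). split; [lia | apply in_seq; lia].
Qed.

Lemma NoDup_interval a n : NoDup (interval a n).
Proof.
  apply NoDup_map_NoDup_ForallPairs; [intros i j _ _; lia | apply seq_NoDup].
Qed.

Lemma length_interval a n : 0 <= n -> Z.of_nat (length (interval a n)) = n.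
Proof. intro Hn. unfold interval. rewrite length_map, length_seq. lia. Qed.

Lemma interval_succ a n : 0 <= n -> interval a (n + 1) = interval a n ++ (a + n) :: nil.
Proof.
  intro Hn. unfold interval. rewrite Z2Nat.inj_add, Nat.add_1_r, seq_S, map_app by lia.
  simpl. repeat f_equal. lia.
Qed.

Lemma interval_add a n m : 0 <= n -> 0 <= m ->
  interval a (n + m) = interval a n ++ interval (a + n) m.
Proof.
  intros Hn Hm. pattern m. apply natlike_ind; [ | | exact Hm].
  - rewrite Z.add_0_r, app_nil_r. reflexivity.
  - intros x Hx IH. unfold Z.succ. rewrite Z.add_assoc, !interval_succ, IH by lia.
    rewrite <- app_assoc, Z.add_assoc. reflexivity.
Qed.

Lemma count_on_nonneg p a n : 0 <= count_on p a n.
Proof. unfold count_on. lia. Qed.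

Lemma count_on_nonpos p a n : n <= 0 -> count_on p a n = 0.
Proof. intro Hn. unfold count_on, interval. replace (Z.to_nat n) with 0%nat by lia. reflexivity. Qed.

Lemma count_on_add p a n m : 0 <= n -> 0 <= m ->
  count_on p a (n + m) = count_on p a n + count_on p (a + n) m.
Proof.
  intros Hn Hm. unfold count_on. rewrite interval_add, filter_app, length_app by lia. lia.
Qed.

Lemma count_on_one p a : count_on p a 1 = bit (p a).
Proof. unfold count_on, interval. simpl. rewrite Z.add_0_r. destruct (p a); reflexivity. Qed.

Lemma count_on_succ p a n : 0 <= n -> count_on p a (n + 1) = count_on p a n + bit (p (a + n)).
Proof. intro Hn. rewrite count_on_add, count_on_one by lia. reflexivity. Qed.

Lemma count_on_succ_le p a n : 0 <= n -> count_on p a (n + 1) <= count_on p a n + 1.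
Proof. intro Hn. rewrite count_on_succ by exact Hn. unfold bit. destruct p; lia. Qed.

Lemma count_on_succ_le_tail p a n : 0 <= n -> count_on p a (1 + n) <= 1 + count_on p (a + 1) n.
Proof.
  intro Hn. rewrite count_on_add, count_on_one by lia. unfold bit. destruct p; lia.
Qed.

Lemma count_on_mono p a n m : 0 <= n <= m -> count_on p a n <= count_on p a m.
Proof.
  intro H. replace m with (n + (m - n)) by ring. rewrite count_on_add by lia.
  pose proof (count_on_nonneg p (a + n) (m - n)). lia.
Qed.

Lemma count_on_ext p q a n : (forall x, a <= x < a + n -> p x = q x) ->
  count_on p a n = count_on q a n.
Proof.
  intro H. unfold count_on. do 2 f_equal. apply filter_ext_in.
  intros x Hx. apply H, in_interval, Hx.
Qed.

Lemma count_on_shift p a c n : count_on p (a + c) n = count_on (fun x => p (x + c)) a n.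
Proof.
  unfold count_on.
  replace (interval (a + c) n) with (map (fun x => x + c) (interval a n)).
  - rewrite filter_map_swap, length_map. reflexivity.
  - unfold interval. rewrite map_map. apply map_ext. intro i. lia.
Qed.

Lemma count_on_true a n : 0 <= n -> count_on (fun _ => true) a n = n.
Proof. intro Hn. unfold count_on. rewrite List.filter_true. apply length_interval, Hn. Qed.

Lemma count_on_negb p a n : 0 <= n ->
  count_on (fun x => negb (p x)) a n = n - count_on p a n.
Proof.
  intro Hn. unfold count_on. rewrite <- (length_interval a n Hn) at 2.
  rewrite <- (filter_length p (interval a n)). lia.
Qed.

Lemma count_on_orb p q a n : (forall x, a <= x < a + n -> p x && q x = false) ->
  count_on (fun x => p x || q x) a n = count_on p a n + count_on q a n.
Proof.
  intro H. unfold count_on. rewrite <- Nat2Z.inj_add. f_equal.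
  assert (Hdisj : forall x, In x (interval a n) -> p x && q x = false)
    by (intros x Hx; apply H, in_interval, Hx).
  induction (interval a n) as [|x l IH]; [reflexivity |]. simpl.
  specialize (Hdisj x (or_introl eq_refl)) as Hx.
  specialize (IH (fun y Hy => Hdisj y (or_intror Hy))).
  destruct (p x), (q x); simpl in *; try discriminate; lia.
Qed.

Lemma count_on_eqb_disjoint p q a n : 0 <= n ->
  (forall x, a <= x < a + n -> p x && q x = false) ->
  count_on (fun x => Bool.eqb (p x) (q x)) a n = n - count_on p a n - count_on q a n.
Proof.
  intros Hn Hdisj.
  replace (n - count_on p a n - count_on q a n) with (n - (count_on p a n + count_on q a n))
    by ring.
  rewrite <- count_on_orb, <- count_on_negb by assumption.
  apply count_on_ext. intros x Hx. specialize (Hdisj x Hx).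
  destruct (p x), (q x); simpl in *; congruence.
Qed.

Lemma count_on_le_inj (p q : Z -> bool) (f : Z -> Z) a n b m :
  (forall i, a <= i < a + n -> q i = true -> b <= f i < b + m /\ p (f i) = true) ->
  (forall i i', a <= i < a + n -> a <= i' < a + n -> q i = true -> q i' = true ->
     f i = f i' -> i = i') ->
  count_on q a n <= count_on p b m.
Proof.
  intros Hf Hinj. unfold count_on. apply Nat2Z.inj_le.
  rewrite <- (length_map f). apply NoDup_incl_length.
  - apply NoDup_map_NoDup_ForallPairs; [| apply NoDup_filter, NoDup_interval].
    intros i i' Hi Hi'. apply filter_In in Hi as [Hi Hqi], Hi' as [Hi' Hqi'].
    apply in_interval in Hi, Hi'. apply Hinj; assumption.
  - intros y Hy. apply in_map_iff in Hy as [i [<- Hi]]. apply filter_In in Hi as [Hi Hqi].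
    apply in_interval in Hi. destruct (Hf i Hi Hqi). apply filter_In.
    split; [apply in_interval |]; assumption.
Qed.

Lemma count_on_lt_2 p a n : 0 < n -> count_on p a n < 2 ->
  exists j0, a <= j0 < a + n /\ forall j, a <= j < a + n -> j <> j0 -> p j = false.
Proof.
  intros Hn Hlt.
  destruct (classic (exists j0, a <= j0 < a + n /\ p j0 = true)) as [[j0 [Hj0 Hp0]] | Hnone].
  - exists j0. split; [exact Hj0 |]. intros j Hj Hne. destruct (p j) eqn:Hpj; [exfalso | reflexivity].
    assert (Htwo : count_on (fun _ => true) 0 2 <= count_on p a n).
    { apply (count_on_le_inj p _ (fun i => if i =? 0 then j0 else j)).
      - intros i Hi _. destruct (Z.eqb_spec i 0); auto.
      - intros i i' Hi Hi' _ _.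
        destruct (Z.eqb_spec i 0), (Z.eqb_spec i' 0); intros; lia. }
    rewrite count_on_true in Htwo; lia.
  - exists a. split; [lia |]. intros j Hj _. destruct (p j) eqn:Hpj; [| reflexivity].
    exfalso. apply Hnone. exists j. auto.
Qed.

Lemma count_on_periodic p P a : 0 <= P -> (forall x, p (x + P) = p x) ->
  count_on p a P = count_on p 0 P.
Proof.
  intros HP Hper.
  assert (Hstep : forall b, count_on p (b + 1) P = count_on p b P).
  { intro b.
    assert (E1 : count_on p b (P + 1) = count_on p b P + bit (p b))
      by (rewrite count_on_succ, Hper by lia; reflexivity).
    assert (E2 : count_on p b (1 + P) = bit (p b) + count_on p (b + 1) P)
      by (rewrite count_on_add, count_on_one by lia; reflexivity).
    rewrite Z.add_comm in E2. lia. }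
  induction a using Z.peano_ind.
  - reflexivity.
  - rewrite <- Z.add_1_r, Hstep. assumption.
  - rewrite <- IHa, <- (Hstep (Z.pred a)). f_equal. lia.
Qed.

Lemma count_on_blocks_le p a n m c : 0 <= n -> 0 <= m ->
  (forall r, 0 <= r < m -> count_on p (a + r * n) n <= c) ->
  count_on p a (m * n) <= c * m.
Proof.
  intros Hn Hm. pattern m. apply natlike_ind; [ | | exact Hm].
  - intros _. rewrite count_on_nonpos; lia.
  - intros x Hx IH Hblock. replace (Z.succ x * n) with (x * n + n) by ring.
    rewrite count_on_add by nia.
    specialize (IH (fun r Hr => Hblock r ltac:(lia))). specialize (Hblock x ltac:(lia)). lia.
Qed.

Lemma count_on_blocks_ge p a n m c : 0 <= n -> 0 <= m ->
  (forall r, 0 <= r < m -> c <= count_on p (a + r * n) n) ->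
  c * m <= count_on p a (m * n).
Proof.
  intros Hn Hm. pattern m. apply natlike_ind; [ | | exact Hm].
  - intros _. rewrite count_on_nonpos; lia.
  - intros x Hx IH Hblock. replace (Z.succ x * n) with (x * n + n) by ring.
    rewrite count_on_add by nia.
    specialize (IH (fun r Hr => Hblock r ltac:(lia))). specialize (Hblock x ltac:(lia)). lia.
Qed.

Lemma count_on_le_of_windows p P c : 0 < P -> (forall a, count_on p a P <= c) ->
  forall a n, 0 <= n -> count_on p a n * P <= c * n + c * P.
Proof.
  intros HP Hwin a n Hn.
  pose proof (Z.mul_div_le n P HP). pose proof (Z.mul_succ_div_gt n P HP).
  assert (Hq : 0 <= n / P) by (apply Z.div_pos; lia).
  assert (Hc : 0 <= c) by (pose proof (Hwin a); pose proof (count_on_nonneg p a P); lia).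
  assert (Hmono : count_on p a n <= count_on p a ((n / P + 1) * P)) by (apply count_on_mono; nia).
  assert (Hblocks : count_on p a ((n / P + 1) * P) <= c * (n / P + 1))
    by (apply count_on_blocks_le; auto; lia).
  nia.
Qed.

Lemma count_on_ge_of_windows p P c : 0 < P -> 0 <= c -> (forall a, c <= count_on p a P) ->
  forall a n, 0 <= n -> c * n - c * P <= count_on p a n * P.
Proof.
  intros HP Hc Hwin a n Hn.
  pose proof (Z.mul_div_le n P HP). pose proof (Z.mul_succ_div_gt n P HP).
  assert (Hq : 0 <= n / P) by (apply Z.div_pos; lia).
  assert (Hmono : count_on p a (n / P * P) <= count_on p a n) by (apply count_on_mono; nia).
  assert (Hblocks : c * (n / P) <= count_on p a (n / P * P))
    by (apply count_on_blocks_ge; auto; lia).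
  nia.
Qed.

(** * Agreements and flips of a periodic boolean sequence *)

Lemma odd_ge_of_even_le a b : b <= a -> Z.even b = true -> Z.odd a = true -> b + 1 <= a.
Proof.
  intros Hle Hb Ha. destruct (Z.eq_dec a b) as [-> | Hne]; [| lia].
  rewrite <- Z.negb_even, Hb in Ha. discriminate.
Qed.

Lemma orbit_step_eq_0 g k M d e : 0 < g -> rel_prime M k ->
  (2 * g * M | 2 * g * k * d + e) -> -M < d < M -> -2 * g < e < 2 * g -> d = 0 /\ e = 0.
Proof.
  intros Hg Hcop [t Ht] Hd He.
  assert (He0 : e = 0).
  { assert (Hez : e = 2 * g * (t * M - k * d))
      by (replace e with (t * (2 * g * M) - 2 * g * k * d) by lia; ring).
    rewrite Hez in He |- *. clear - Hg He. generalize dependent (t * M - k * d). intros z He.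
    destruct (Z.lt_trichotomy z 0) as [Hz | [Hz | Hz]]; nia. }
  subst e. split; [| reflexivity].
  assert (HMd : (M | d)).
  { apply Gauss with k; [| exact Hcop]. exists t.
    apply (Z.mul_reg_l _ _ (2 * g)); [lia |].
    transitivity (2 * g * k * d + 0); [ring | rewrite Ht; ring]. }
  destruct HMd as [s ->].
  destruct (Z.lt_trichotomy s 0) as [Hs | [-> | Hs]]; nia.
Qed.

Section Periodic.

Variables (beta : Z -> bool) (P : Z).
Hypothesis P_pos : 0 < P.
Hypothesis beta_periodic : forall y, beta (y + P) = beta y.

Lemma beta_add_divide y z : (P | z) -> beta (y + z) = beta y.
Proof.
  intros [q ->]. revert y.
  induction q using Z.peano_ind; intro y.
  - rewrite Z.mul_0_l, Z.add_0_r. reflexivity.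
  - replace (y + Z.succ q * P) with (y + q * P + P) by ring. rewrite beta_periodic. apply IHq.
  - rewrite <- beta_periodic. replace (y + Z.pred q * P + P) with (y + q * P)
      by (unfold Z.pred; ring). apply IHq.
Qed.

Lemma beta_mod y : beta (y mod P) = beta y.
Proof.
  rewrite <- (beta_add_divide (y mod P) (P * (y / P))) by (exists (y / P); ring).
  f_equal. rewrite Z.add_comm. symmetry. apply Z.div_mod. lia.
Qed.

Definition agree_at (d y : Z) : bool := Bool.eqb (beta y) (beta (y + d)).

Definition flip_at (y : Z) : bool := negb (Bool.eqb (beta y) (beta (y + 1))).

Definition orbit_agree (d r j : Z) : bool := agree_at d (r + d * j).

Lemma beta_mod_add y d : beta (y mod P + d) = beta (y + d).
Proof.
  rewrite <- beta_mod, Z.add_mod_idemp_l, beta_mod by lia. reflexivity.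
Qed.

Lemma agree_at_mod d y : agree_at d (y mod P) = agree_at d y.
Proof. unfold agree_at. rewrite beta_mod, beta_mod_add. reflexivity. Qed.

Lemma flip_at_mod y : flip_at (y mod P) = flip_at y.
Proof. unfold flip_at. rewrite beta_mod, beta_mod_add. reflexivity. Qed.

Lemma orbit_value d r m : 0 <= m ->
  beta (r + d * m) = xorb (beta r) (Z.odd (count_on (fun j => negb (orbit_agree d r j)) 0 m)).
Proof.
  intro Hm. pattern m. apply natlike_ind; [ | | exact Hm].
  - rewrite Z.mul_0_r, Z.add_0_r, count_on_nonpos, xorb_false_r by lia. reflexivity.
  - intros x Hx IH. unfold Z.succ. rewrite count_on_succ, Z.odd_add by lia. simpl.
    unfold orbit_agree at 2, agree_at.
    replace (r + d * (x + 1)) with (r + d * x + d) by ring. rewrite IH.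
    destruct (beta r), (beta (r + d * x + d)),
      (Z.odd (count_on (fun j => negb (orbit_agree d r j)) 0 x)); reflexivity.
Qed.

Lemma orbit_alternates d r j0 m : 0 <= m ->
  (forall i, 0 <= i < m -> orbit_agree d r (j0 + i) = false) ->
  beta (r + d * (j0 + m)) = xorb (beta (r + d * j0)) (Z.odd m).
Proof.
  intros Hm Hrun.
  replace (r + d * (j0 + m)) with ((r + d * j0) + d * m) by ring.
  rewrite orbit_value by exact Hm. f_equal.
  rewrite <- (count_on_true 0 m Hm) at 2. f_equal. apply count_on_ext.
  intros i Hi. unfold orbit_agree. rewrite <- Z.add_assoc, <- Z.mul_add_distr_l.
  fold (orbit_agree d r (j0 + i)). rewrite Hrun by lia. reflexivity.
Qed.

Lemma orbit_agree_periodic d r j M : (P | d * M) ->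
  orbit_agree d r (j + M) = orbit_agree d r j.
Proof.
  intro Hcycle. unfold orbit_agree, agree_at.
  replace (r + d * (j + M)) with (r + d * j + d * M) by ring.
  replace (r + d * j + d * M + d) with (r + d * j + d + d * M) by ring.
  rewrite (beta_add_divide (r + d * j)), (beta_add_divide (r + d * j + d)) by exact Hcycle.
  reflexivity.
Qed.

Lemma orbit_agreements_parity d r M : 0 <= M -> (P | d * M) ->
  Z.odd (count_on (orbit_agree d r) 0 M) = Z.odd M.
Proof.
  intros HM Hcycle.
  assert (Hclosed := orbit_value d r M HM).
  rewrite beta_add_divide, count_on_negb in Hclosed by assumption.
  rewrite Z.odd_sub in Hclosed.
  destruct (beta r), (Z.odd M), (Z.odd (count_on (orbit_agree d r) 0 M));
    simpl in Hclosed; congruence.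
Qed.

Lemma mod_eq_divide x y : x mod P = y mod P -> (P | x - y).
Proof.
  intro Hxy. apply Z.cong_iff_ex in Hxy as [t Ht]. exists t. exact Ht.
Qed.

Lemma agreements_ge_orbits g k M need : 0 < g -> 0 < M -> P = 2 * g * M -> rel_prime M k ->
  0 <= need ->
  (forall r, 0 <= r < 2 * g -> need <= count_on (orbit_agree (2 * g * k) r) 0 M) ->
  2 * g * need <= count_on (agree_at (2 * g * k)) 0 P.
Proof.
  intros Hg HM HP Hcop Hneed Horbit.
  set (d := 2 * g * k).
  set (q := fun i => orbit_agree d (i / M) (i mod M)).
  assert (Hblocks : need * (2 * g) <= count_on q 0 (2 * g * M)).
  { apply count_on_blocks_ge; try lia. intros r Hr.
    rewrite count_on_shift.
    rewrite <- (count_on_ext (orbit_agree d r)); [apply Horbit; lia |].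
    intros j Hj. unfold q.
    rewrite Z.div_add, Z.mod_add, Z.div_small, Z.mod_small by lia. reflexivity. }
  enough (count_on q 0 (2 * g * M) <= count_on (agree_at d) 0 P) by lia.
  apply (count_on_le_inj _ q (fun i => (i / M + d * (i mod M)) mod P)).
  - intros i _ Hqi. split; [pose proof (Z.mod_pos_bound (i / M + d * (i mod M)) P); lia |].
    rewrite agree_at_mod. exact Hqi.
  - intros i i' Hi Hi' _ _ Hf. apply mod_eq_divide in Hf.
    pose proof (Z.div_mod i M ltac:(lia)) as Ei. pose proof (Z.div_mod i' M ltac:(lia)) as Ei'.
    pose proof (Z.mod_pos_bound i M HM). pose proof (Z.mod_pos_bound i' M HM).
    assert (Hr : 0 <= i / M < 2 * g) by (split; [apply Z.div_pos | apply Z.div_lt_upper_bound]; lia).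
    assert (Hr' : 0 <= i' / M < 2 * g) by (split; [apply Z.div_pos | apply Z.div_lt_upper_bound]; lia).
    destruct (orbit_step_eq_0 g k M (i mod M - i' mod M) (i / M - i' / M)) as [Hj Hr0];
      [lia | exact Hcop | | lia | lia |].
    + rewrite <- HP. replace (2 * g * k * (i mod M - i' mod M) + (i / M - i' / M))
        with (i / M + d * (i mod M) - (i' / M + d * (i' mod M))) by (unfold d; ring).
      exact Hf.
    + rewrite Ei, Ei'. f_equal; lia.
Qed.

Lemma flip_near_two_step_change z : beta z <> beta (z + 2) ->
  flip_at (z + bit (negb (flip_at z))) = true.
Proof.
  intro Hchange. unfold bit. destruct (flip_at z) eqn:Hflip; simpl.
  - rewrite Z.add_0_r. exact Hflip.
  - unfold flip_at in *. replace (z + 1 + 1) with (z + 2) by ring.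
    destruct (beta z), (beta (z + 1)), (beta (z + 2)); simpl in *; congruence.
Qed.

Lemma flips_ge_of_two_step_changes k M c n : P = 2 * M -> rel_prime M k -> 0 <= n <= M ->
  (forall i, 0 <= i < n -> beta (c + 2 * k * i) <> beta (c + 2 * k * i + 2)) ->
  n <= count_on flip_at 0 P.
Proof.
  intros HP Hcop Hn Hchange.
  set (e := fun i => bit (negb (flip_at (c + 2 * k * i)))).
  assert (He : forall i, 0 <= e i <= 1) by (intro i; unfold e, bit; destruct flip_at; simpl; lia).
  rewrite <- (count_on_true 0 n) by lia.
  apply (count_on_le_inj _ _ (fun i => (c + 2 * k * i + e i) mod P)).
  - intros i Hi _. split; [pose proof (Z.mod_pos_bound (c + 2 * k * i + e i) P); lia |].
    rewrite flip_at_mod. apply flip_near_two_step_change, Hchange. lia.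
  - intros i i' Hi Hi' _ _ Hf. apply mod_eq_divide in Hf.
    destruct (orbit_step_eq_0 1 k M (i - i') (e i - e i')) as [Hd _];
      [lia | exact Hcop | | lia | pose proof (He i); pose proof (He i'); lia | lia].
    replace (2 * 1 * M) with P by lia.
    replace (2 * 1 * k * (i - i') + (e i - e i')) with (c + 2 * k * i + e i - (c + 2 * k * i' + e i'))
      by ring.
    exact Hf.
Qed.

Lemma orbit_agreements_ge_2 k M tau sigma r : P = 2 * M -> rel_prime M k ->
  Z.odd tau = true -> 0 < tau < M -> (P | 2 * k * tau - 2 * sigma) -> (sigma = 1 \/ sigma = -1) ->
  count_on flip_at 0 P < M - tau ->
  2 <= count_on (orbit_agree (2 * k) r) 0 M.
Proof.
  intros HP Hcop Htau Htau_range Htwist Hsigma Hflips.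
  apply Z.nlt_ge. intro Hlt.
  destruct (count_on_lt_2 _ 0 M ltac:(lia) Hlt) as [js [Hjs Hother]].
  assert (Hcycle : (P | 2 * k * M)) by (exists k; rewrite HP; ring).
  assert (Hrun : forall i, 0 <= i < M - 1 -> orbit_agree (2 * k) r (js + 1 + i) = false).
  { intros i Hi. destruct (Z_lt_le_dec (js + 1 + i) M).
    - apply Hother; lia.
    - replace (js + 1 + i) with (js + 1 + i - M + M) by ring.
      rewrite orbit_agree_periodic by exact Hcycle. apply Hother; lia. }
  set (x := fun m => r + 2 * k * (js + 1 + m)).
  assert (Halt : forall m, 0 <= m <= M - 1 -> beta (x m) = xorb (beta (x 0)) (Z.odd m)).
  { intros m Hm. unfold x. rewrite Z.add_0_r.
    apply orbit_alternates; [lia |]. intros i Hi. apply Hrun. lia. }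
  (* [x (i + tau) = x i + 2 sigma (mod P)], and tau is odd *)
  assert (Hshift : forall i, 0 <= i < M - tau -> beta (x i + 2 * sigma) = negb (beta (x i))).
  { intros i Hi.
    replace (x i + 2 * sigma) with (x (i + tau) + - (2 * k * tau - 2 * sigma)) by (unfold x; ring).
    rewrite beta_add_divide by (apply Z.divide_opp_r; exact Htwist).
    rewrite (Halt (i + tau)), (Halt i), Z.odd_add, Htau by lia.
    destruct (beta (x 0)), (Z.odd i); reflexivity. }
  enough (M - tau <= count_on flip_at 0 P) by lia.
  apply (flips_ge_of_two_step_changes k M (x 0 + sigma - 1)); [exact HP | exact Hcop | lia |].
  intros i Hi.
  replace (x 0 + sigma - 1 + 2 * k * i) with (x i + sigma - 1) by (unfold x; ring).
  destruct Hsigma as [-> | ->].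
  - replace (x i + 1 - 1) with (x i) by ring. replace (x i + 2) with (x i + 2 * 1) by ring.
    rewrite Hshift by exact Hi. destruct (beta (x i)); discriminate.
  - replace (x i + -1 - 1 + 2) with (x i) by ring.
    replace (x i + -1 - 1) with (x i + 2 * -1) by ring.
    rewrite Hshift by exact Hi. destruct (beta (x i)); discriminate.
Qed.

Lemma agreements_ge_odd_orbits g k M : 0 < g -> 0 < M -> P = 2 * g * M -> rel_prime M k ->
  Z.odd M = true -> 2 * g <= count_on (agree_at (2 * g * k)) 0 P.
Proof.
  intros Hg HM HP Hcop Hodd.
  rewrite <- (Z.mul_1_r (2 * g)) at 1.
  apply agreements_ge_orbits with M; auto; [lia |]. intros r _.
  apply (odd_ge_of_even_le _ 0); [apply count_on_nonneg | reflexivity |].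
  rewrite orbit_agreements_parity by (lia || (exists k; rewrite HP; ring)). exact Hodd.
Qed.

Section Twisted.

Variables k M tau sigma : Z.
Hypothesis P_eq : P = 2 * M.
Hypothesis coprime_M_k : rel_prime M k.
Hypothesis tau_odd : Z.odd tau = true.
Hypothesis tau_range : 0 < tau < M.
Hypothesis twist : (P | 2 * k * tau - 2 * sigma).
Hypothesis sigma_unit : sigma = 1 \/ sigma = -1.
Hypothesis few_flips : count_on flip_at 0 P < M - tau.

Lemma agreements_ge_twisted : 4 <= count_on (agree_at (2 * k)) 0 P.
Proof.
  replace (2 * k) with (2 * 1 * k) by ring.
  apply (agreements_ge_orbits 1 k M 2); try lia; auto.
  intros r _. rewrite Z.mul_1_r.
  apply (orbit_agreements_ge_2 k M tau sigma); assumption.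
Qed.

Lemma agreements_ge_twisted_odd : Z.odd M = true -> 6 <= count_on (agree_at (2 * k)) 0 P.
Proof.
  intro Hodd. replace (2 * k) with (2 * 1 * k) by ring.
  apply (agreements_ge_orbits 1 k M 3); try lia; auto.
  intros r _. rewrite Z.mul_1_r.
  apply (odd_ge_of_even_le _ 2); [| reflexivity |].
  - apply (orbit_agreements_ge_2 k M tau sigma); assumption.
  - rewrite orbit_agreements_parity by (lia || (exists k; rewrite P_eq; ring)). exact Hodd.
Qed.

End Twisted.

End Periodic.

Lemma agreements_ge_2l beta k l : 1 <= l <= 3 -> l <= k ->
  (forall y, beta (y + (4 * k + 2 * l)) = beta y) ->
  count_on (flip_at beta) 0 (4 * k + 2 * l) <= 2 * l ->
  2 * l <= count_on (agree_at beta (2 * k)) 0 (4 * k + 2 * l).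
Proof.
  intros Hl Hk Hper Hflips.
  assert (HP : 0 < 4 * k + 2 * l) by lia.
  (* Odd orbit lengths for l = 1, for 2 | k when l = 2 and for 3 | k when l = 3. Otherwise
     there are two orbits of length M = 2k + l, twisted by tau = k (l = 2: 2k^2 - 2 = c P),
     resp. tau = 2a + 1 or 2a + 3 (l = 3, k = 3a + 1 or 3a + 2: 2k tau -+ 2 = a P or (a+1) P). *)
  assert (l = 1 \/ l = 2 \/ l = 3) as [-> | [-> | ->]] by lia.
  - replace (2 * k) with (2 * 1 * k) by ring.
    apply (agreements_ge_odd_orbits beta _ HP Hper 1 k (2 * k + 1)); try lia.
    + apply bezout_rel_prime, (Bezout_intro _ _ _ 1 (-2)). ring.
    + apply Z.odd_spec. exists k. ring.
  - destruct (Z.Even_or_Odd k) as [[c ->] | [c ->]].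
    + replace (2 * (2 * c)) with (2 * 2 * c) by ring.
      apply (agreements_ge_odd_orbits beta _ HP Hper 2 c (2 * c + 1)); try lia.
      * apply bezout_rel_prime, (Bezout_intro _ _ _ 1 (-2)). ring.
      * apply Z.odd_spec. exists c. ring.
    + apply (agreements_ge_twisted beta _ HP Hper _ (2 * (2 * c + 1) + 2) (2 * c + 1) 1);
        try lia.
      * apply bezout_rel_prime, (Bezout_intro _ _ _ (- c) (2 * c + 1)). ring.
      * apply Z.odd_spec. exists c. ring.
      * exists c. ring.
  - assert (Hk3 : exists a, k = 3 * a \/ k = 3 * a + 1 \/ k = 3 * a + 2)
      by (exists (k / 3); pose proof (Z.div_mod k 3 ltac:(lia)); pose proof (Z.mod_pos_bound k 3); lia).
    destruct Hk3 as [a [-> | [-> | ->]]].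
    + replace (2 * (3 * a)) with (2 * 3 * a) by ring.
      apply (agreements_ge_odd_orbits beta _ HP Hper 3 a (2 * a + 1)); try lia.
      * apply bezout_rel_prime, (Bezout_intro _ _ _ 1 (-2)). ring.
      * apply Z.odd_spec. exists a. ring.
    + apply (agreements_ge_twisted_odd beta _ HP Hper _ (2 * (3 * a + 1) + 3) (2 * a + 1) 1);
        try lia.
      * apply bezout_rel_prime, (Bezout_intro _ _ _ (- a) (2 * a + 1)). ring.
      * apply Z.odd_spec. exists a. ring.
      * exists a. ring.
      * apply Z.odd_spec. exists (3 * a + 2). ring.
    + apply (agreements_ge_twisted_odd beta _ HP Hper _ (2 * (3 * a + 2) + 3) (2 * a + 3) (-1));
        try lia.
      * apply bezout_rel_prime, (Bezout_intro _ _ _ (a + 1) (- (2 * a + 3))). ring.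
      * apply Z.odd_spec. exists (a + 1). ring.
      * exists (a + 1). ring.
      * apply Z.odd_spec. exists (3 * a + 3). ring.
Qed.

(** * Windows of an independent set *)

Definition parity_code (A : Z -> bool) (P y : Z) : bool := xorb (A (y mod P)) (Z.odd y).

Lemma parity_code_periodic A P y : Z.even P = true ->
  parity_code A P (y + P) = parity_code A P y.
Proof.
  intro HP. unfold parity_code.
  rewrite <- (Z.mul_1_l P) at 1. rewrite Z_mod_plus_full, Z.odd_add, <- (Z.negb_even P), HP.
  destruct (Z.odd y); reflexivity.
Qed.

Lemma agree_at_parity_code A P d y : Z.even d = true -> 0 <= y < P ->
  agree_at (parity_code A P) d y = Bool.eqb (A y) (A ((y + d) mod P)).
Proof.
  intros Hd Hy. unfold agree_at, parity_code.
  rewrite Z.mod_small, Z.odd_add, <- (Z.negb_even d), Hd by exact Hy.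
  destruct (A y), (A ((y + d) mod P)), (Z.odd y); reflexivity.
Qed.

Lemma flip_at_parity_code A P t : 0 <= t -> t + 1 < P ->
  flip_at (parity_code A P) t = Bool.eqb (A t) (A (t + 1)).
Proof.
  intros Ht HtP. unfold flip_at, parity_code.
  rewrite !Z.mod_small, Z.odd_add by lia.
  destruct (A t), (A (t + 1)), (Z.odd t); reflexivity.
Qed.

Section IndependentWindow.

Variables (A : Z -> bool) (k l : Z).
Hypothesis l_range : 1 <= l <= 3.
Hypothesis l_le_k : l <= k.
Hypothesis A_indep : independent (1 :: 2 * k :: 2 * k + 2 * l :: nil) A.

Local Notation P := (4 * k + 2 * l).

Lemma indep_disjoint i j : In (Z.abs (i - j)) (1 :: 2 * k :: 2 * k + 2 * l :: nil) ->
  A i && A j = false.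
Proof.
  intro Hdist. destruct (A i) eqn:Hi, (A j) eqn:Hj; try reflexivity.
  exfalso. exact (A_indep i j Hi Hj Hdist).
Qed.

Lemma agreements_parity_code :
  count_on (agree_at (parity_code A P) (2 * k)) 0 P = P - 2 * count_on A 0 P.
Proof.
  rewrite (count_on_ext _ (fun y => Bool.eqb (A y) (A ((y + 2 * k) mod P))))
    by (intros y Hy; apply agree_at_parity_code; [apply Z.even_spec; exists k; ring | lia]).
  rewrite count_on_eqb_disjoint by (lia || (intros y Hy; apply indep_disjoint;
    destruct (Z_lt_le_dec (y + 2 * k) P);
    [rewrite Z.mod_small by lia
    | rewrite <- (Z_mod_plus_full _ (-1)), Z.mod_small by lia]; cbn [In]; lia)).
  assert (Hshift : count_on (fun y => A ((y + 2 * k) mod P)) 0 P = count_on A 0 P).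
  { rewrite <- (count_on_shift (fun y => A (y mod P))), count_on_periodic
      by (lia || (intro x; rewrite <- (Z.mul_1_l P) at 1; rewrite Z_mod_plus_full; reflexivity)).
    apply count_on_ext. intros y Hy. rewrite Z.mod_small by lia. reflexivity. }
  lia.
Qed.

Lemma flips_parity_code_le :
  count_on (flip_at (parity_code A P)) 0 P <= P - 2 * count_on A 0 P + 2.
Proof.
  pose proof (count_on_succ_le (flip_at (parity_code A P)) 0 (P - 1) ltac:(lia)) as Hlast.
  pose proof (count_on_succ_le A 0 (P - 1) ltac:(lia)) as Hend.
  pose proof (count_on_succ_le_tail A 0 (P - 1) ltac:(lia)) as Hfirst.
  replace (P - 1 + 1) with P in Hlast, Hend by ring.
  replace (1 + (P - 1)) with P in Hfirst by ring.
  rewrite (count_on_ext _ (fun t => Bool.eqb (A t) (A (t + 1))) 0 (P - 1)) in Hlast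
    by (intros t Ht; apply flip_at_parity_code; lia).
  rewrite count_on_eqb_disjoint in Hlast
    by (lia || (intros t _; apply indep_disjoint; cbn [In]; lia)).
  rewrite <- count_on_shift in Hlast. lia.
Qed.

Lemma independent_window0_le : count_on A 0 P <= 2 * k.
Proof.
  apply Z.nlt_ge. intro Hmany.
  assert (Hagree := agreements_ge_2l (parity_code A P) k l l_range l_le_k).
  rewrite agreements_parity_code in Hagree.
  pose proof flips_parity_code_le.
  enough (2 * l <= P - 2 * count_on A 0 P) by lia.
  apply Hagree; [| lia].
  intro y. apply parity_code_periodic. apply Z.even_spec. exists (2 * k + l). ring.
Qed.

End IndependentWindow.

Lemma independent_window_le A k l a : 1 <= l <= 3 -> l <= k ->
  independent (1 :: 2 * k :: 2 * k + 2 * l :: nil) A ->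
  count_on A a (4 * k + 2 * l) <= 2 * k.
Proof.
  intros Hl Hk Hind.
  rewrite <- (Z.add_0_l a), count_on_shift.
  apply independent_window0_le; [exact Hl | exact Hk |].
  intros i j Hi Hj. replace (i - j) with (i + a - (j + a)) by ring. apply Hind; assumption.
Qed.

(** * The extremal periodic set *)

Lemma count_on_even a m : 0 <= m -> count_on Z.even (2 * a) (2 * m) = m.
Proof.
  intro Hm. pattern m. apply natlike_ind; [ | | exact Hm].
  - apply count_on_nonpos. lia.
  - intros x Hx IH. replace (2 * Z.succ x) with (2 * x + 1 + 1) by ring.
    rewrite !count_on_succ, IH by lia.
    replace (2 * a + (2 * x + 1)) with (2 * (a + x) + 1) by ring.
    replace (2 * a + 2 * x) with (2 * (a + x)) by ring.
    rewrite Z.even_add, !Z.even_mul. simpl. lia.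
Qed.

Lemma count_on_odd a m : 0 <= m -> count_on Z.odd (2 * a) (2 * m) = m.
Proof.
  intro Hm. rewrite (count_on_ext _ (fun x => negb (Z.even x)))
    by (intros x _; symmetry; apply Z.negb_even).
  rewrite count_on_negb, count_on_even by lia. ring.
Qed.

Section Construction.

Variables k l : Z.
Hypothesis k_nonneg : 0 <= k.
Hypothesis l_pos : 0 < l.

Local Notation P := (4 * k + 2 * l).

(* Even residues in [0, 2k), odd residues in [2k, 4k), none in [4k, 4k + 2l). *)
Definition block_pattern (r : Z) : bool := (r <? 4 * k) && Bool.eqb (Z.even r) (r <? 2 * k).

Definition block_set (x : Z) : bool := block_pattern (x mod P).

Lemma block_pattern_spec r : block_pattern r = true ->
  (r < 2 * k /\ exists m, r = 2 * m) \/ (2 * k <= r < 4 * k /\ exists m, r = 2 * m + 1).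
Proof.
  unfold block_pattern. intro Hr. apply andb_prop in Hr as [H4k Heq]. apply Z.ltb_lt in H4k.
  destruct (Z.Even_or_Odd r) as [[m Hm] | [m Hm]]; destruct (Z.ltb_spec r (2 * k)).
  - left. eauto.
  - exfalso. rewrite Hm, Z.even_mul in Heq. discriminate.
  - exfalso. rewrite Hm, Z.even_add, Z.even_mul in Heq. discriminate.
  - right. eauto.
Qed.

Lemma block_pattern_disjoint r s : 0 <= r < P -> (s = 1 \/ s = 2 * k \/ s = 2 * k + 2 * l) ->
  block_pattern r && block_pattern ((r + s) mod P) = false.
Proof.
  intros Hr Hs.
  destruct (block_pattern r) eqn:Hpr; [| reflexivity].
  destruct (block_pattern ((r + s) mod P)) eqn:Hps; [exfalso | reflexivity].
  apply block_pattern_spec in Hpr, Hps.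
  destruct (Z_lt_le_dec (r + s) P).
  - rewrite Z.mod_small in Hps by lia.
    destruct Hpr as [[? [m ?]] | [? [m ?]]], Hps as [[? [m' ?]] | [? [m' ?]]]; lia.
  - rewrite <- (Z_mod_plus_full _ (-1)), Z.mod_small in Hps by lia.
    destruct Hpr as [[? [m ?]] | [? [m ?]]], Hps as [[? [m' ?]] | [? [m' ?]]]; lia.
Qed.

Lemma block_set_independent : independent (1 :: 2 * k :: 2 * k + 2 * l :: nil) block_set.
Proof.
  assert (Hstep : forall i s, (s = 1 \/ s = 2 * k \/ s = 2 * k + 2 * l) ->
            block_set i && block_set (i + s) = false).
  { intros i s Hs. unfold block_set. rewrite <- Z.add_mod_idemp_l by lia.
    apply block_pattern_disjoint; [apply Z.mod_pos_bound; lia | exact Hs]. }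
  intros i j Hi Hj Hdist. cbn [In] in Hdist.
  assert (Hs : Z.abs (i - j) = 1 \/ Z.abs (i - j) = 2 * k \/ Z.abs (i - j) = 2 * k + 2 * l)
    by (destruct Hdist as [? | [? | [? | []]]]; lia).
  destruct (Z_le_gt_dec j i).
  - specialize (Hstep j (Z.abs (i - j)) Hs).
    replace (j + Z.abs (i - j)) with i in Hstep by lia. rewrite Hi, Hj in Hstep. discriminate.
  - specialize (Hstep i (Z.abs (i - j)) Hs).
    replace (i + Z.abs (i - j)) with j in Hstep by lia. rewrite Hi, Hj in Hstep. discriminate.
Qed.

Lemma block_pattern_count : count_on block_pattern 0 P = 2 * k.
Proof.
  replace P with (2 * k + (2 * k + 2 * l)) by ring.
  rewrite !count_on_add by lia.
  rewrite (count_on_ext _ Z.even 0 (2 * k)), (count_on_ext _ Z.odd (0 + 2 * k) (2 * k)),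
    (count_on_ext _ (fun x => negb true) (0 + 2 * k + 2 * k) (2 * l)).
  - rewrite count_on_negb, count_on_true by lia.
    rewrite <- (Z.mul_0_r 2) at 1. rewrite Z.add_0_l, count_on_even, count_on_odd by lia. ring.
  - intros x Hx. unfold block_pattern. destruct (Z.ltb_spec x (4 * k)); [lia | reflexivity].
  - intros x Hx. unfold block_pattern.
    destruct (Z.ltb_spec x (4 * k)), (Z.ltb_spec x (2 * k)); try lia.
    rewrite <- Z.negb_even. destruct (Z.even x); reflexivity.
  - intros x Hx. unfold block_pattern.
    destruct (Z.ltb_spec x (4 * k)), (Z.ltb_spec x (2 * k)); try lia.
    destruct (Z.even x); reflexivity.
Qed.

Lemma block_set_window a : count_on block_set a P = 2 * k.
Proof.
  rewrite count_on_periodic by (lia || (intro x; unfold block_set;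
    rewrite <- (Z.mul_1_l P) at 1; rewrite Z_mod_plus_full; reflexivity)).
  rewrite <- block_pattern_count. apply count_on_ext.
  intros x Hx. unfold block_set. rewrite Z.mod_small by lia. reflexivity.
Qed.

End Construction.

(** * Densities *)

Local Open Scope R_scope.

Lemma dens_ratio_count A N :
  dens_ratio A N = IZR (count_on A (- Z.of_nat N) (Z.of_nat (2 * N + 1))) / INR (2 * N + 1).
Proof.
  unfold dens_ratio, count_on. rewrite <- INR_IZR_INZ. do 4 f_equal.
  unfold window, interval. rewrite Nat2Z.id. apply map_ext. intro i. lia.
Qed.

Lemma div_le_of_cross (x c n P : R) : 0 < n -> 0 < P ->
  x * P <= c * n + c * P -> x / n <= c / P + c / n.
Proof.
  intros Hn HP H.
  apply Rmult_le_reg_r with (n * P); [nra |].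
  replace (x / n * (n * P)) with (x * P) by (field; lra).
  replace ((c / P + c / n) * (n * P)) with (c * n + c * P) by (field; lra).
  exact H.
Qed.

Lemma div_ge_of_cross (x c n P : R) : 0 < n -> 0 < P ->
  c * n - c * P <= x * P -> c / P - c / n <= x / n.
Proof.
  intros Hn HP H.
  apply Rmult_le_reg_r with (n * P); [nra |].
  replace (x / n * (n * P)) with (x * P) by (field; lra).
  replace ((c / P - c / n) * (n * P)) with (c * n - c * P) by (field; lra).
  exact H.
Qed.

Lemma is_lim_seq_div_odd c : is_lim_seq (fun N => c / INR (2 * N + 1)) 0.
Proof.
  assert (Hodd : is_lim_seq (fun N => INR (2 * N + 1)) p_infty).
  { apply is_lim_seq_le_p_loc with (u := INR); [| apply is_lim_seq_INR].
    exists 0%nat. intros n _. apply le_INR. lia. }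
  pose proof (is_lim_seq_scal_l _ c _ (is_lim_seq_inv _ _ Hodd ltac:(discriminate))) as H.
  rewrite Rbar_mult_0_r in H. exact H.
Qed.

Section WindowDensity.

Variables (A : Z -> bool) (P c : Z).
Hypothesis P_pos : (0 < P)%Z.

Lemma dens_ratio_le_of_windows N : (forall a, (count_on A a P <= c)%Z) ->
  dens_ratio A N <= IZR c / IZR P + IZR c / INR (2 * N + 1).
Proof.
  intro Hwin. rewrite dens_ratio_count, INR_IZR_INZ.
  apply div_le_of_cross; [apply IZR_lt; lia | apply IZR_lt; exact P_pos |].
  rewrite <- !mult_IZR, <- plus_IZR. apply IZR_le.
  apply count_on_le_of_windows; [exact P_pos | exact Hwin | lia].
Qed.

Lemma dens_ratio_ge_of_windows N : (0 <= c)%Z -> (forall a, (c <= count_on A a P)%Z) ->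
  IZR c / IZR P - IZR c / INR (2 * N + 1) <= dens_ratio A N.
Proof.
  intros Hc Hwin. rewrite dens_ratio_count, INR_IZR_INZ.
  apply div_ge_of_cross; [apply IZR_lt; lia | apply IZR_lt; exact P_pos |].
  rewrite <- !mult_IZR, <- minus_IZR. apply IZR_le.
  apply count_on_ge_of_windows; [exact P_pos | exact Hc | exact Hwin | lia].
Qed.

Lemma is_lim_seq_window_bound (sign : R) :
  is_lim_seq (fun N => IZR c / IZR P + sign * (IZR c / INR (2 * N + 1))) (IZR c / IZR P).
Proof.
  pose proof (is_lim_seq_plus' _ _ _ _ (is_lim_seq_const (IZR c / IZR P))
    (is_lim_seq_scal_l _ sign _ (is_lim_seq_div_odd (IZR c)))) as H.
  rewrite Rmult_0_r, Rplus_0_r in H. exact H.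
Qed.

Lemma density_le_of_windows : (forall a, (count_on A a P <= c)%Z) ->
  Rbar_le (density A) (IZR c / IZR P).
Proof.
  intro Hwin. unfold density.
  rewrite <- (is_LimSup_seq_unique _ _ (is_lim_LimSup_seq _ _ (is_lim_seq_window_bound 1))).
  apply LimSup_le. exists 0%nat. intros N _. rewrite Rmult_1_l.
  apply dens_ratio_le_of_windows, Hwin.
Qed.

Lemma density_of_windows : (0 <= c)%Z -> (forall a, count_on A a P = c) ->
  density A = IZR c / IZR P.
Proof.
  intros Hc Hwin. unfold density. apply is_LimSup_seq_unique, is_lim_LimSup_seq.
  apply is_lim_seq_le_le_loc with (u := fun N => IZR c / IZR P + -1 * (IZR c / INR (2 * N + 1)))
    (w := fun N => IZR c / IZR P + 1 * (IZR c / INR (2 * N + 1)));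
    [| apply is_lim_seq_window_bound | apply is_lim_seq_window_bound].
  exists 0%nat. intros N _. split.
  - replace (IZR c / IZR P + -1 * (IZR c / INR (2 * N + 1)))
      with (IZR c / IZR P - IZR c / INR (2 * N + 1)) by ring.
    apply dens_ratio_ge_of_windows; [exact Hc | intro a; rewrite Hwin; lia].
  - rewrite Rmult_1_l. apply dens_ratio_le_of_windows. intro a. rewrite Hwin. lia.
Qed.

End WindowDensity.

Lemma Rbar_lub_max (E : Rbar -> Prop) (m : Rbar) :
  (forall x, E x -> Rbar_le x m) -> E m -> Rbar_lub E = m.
Proof.
  intros Hub Hm. apply Rbar_is_lub_unique. split; [exact Hub |].
  intros b Hb. apply Hb, Hm.
Qed.

Theorem theorem31 (l k : Z) :
  (1 <= l <= 3)%Z -> (l <= k)%Z ->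
  indep_ratio (1%Z :: (2 * k)%Z :: (2 * k + 2 * l)%Z :: nil)
  = Finite (IZR (2 * k) / IZR (4 * k + 2 * l)).
Proof.
  intros Hl Hk. apply Rbar_lub_max.
  - intros x [A [Hind <-]]. apply density_le_of_windows; [lia |].
    intro a. apply independent_window_le; assumption.
  - exists (block_set k l). split.
    + apply block_set_independent; lia.
    + apply density_of_windows; [lia | lia |]. intro a. apply block_set_window; lia.
Qed.
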